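(* Let $\{X_n\}$ be the Bessel-like walk of the context, $f_m=P_0(\tau_0=m)$ for $m\ge1$, and for even $0<m<n$ let $A_{m,n}=\frac{2}{n-m+2}\sum_{j=m}^nf_j$. Then for all even integers $0<k<m$, \[ f_m\le\frac{f_{m+k}+f_{m-k}}{2}\qquad\text{and}\qquad f_m\le A_{m-k,m+k}. \]
   Context: Let $\{X_n\}_{n\ge0}$ be a Markov chain on $\mathbb{Z}_+=\{0,1,2,\dots\}$ with steps $\pm1$, reflecting at $0$ (i.e. $p(0,1)=1$), and for $x\ge1$ transition probabilities $p_x=p(x,x+1)$, $q_x=p(x,x-1)=1-p_x$, where $p_x=\frac12\left(1-\frac{\delta}{2x}+\frac{R_x}{2}\right)$ for a fixed $\delta\ge-1$ and $R_x=o(1/x)$, and $p_x,q_x\in[\epsilon,1-\epsilon]$ for some $\epsilon>0$ and all $x\ge1$. $P_0$ is the law of the chain started at $0$, and $\tau_0=\min\{n\ge1:X_n=0\}$ is the first return time to $0$. *)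

From HB Require Import structures.
From mathcomp Require Import all_boot all_order all_algebra.
From mathcomp Require Import all_classical all_reals all_analysis.
Set Implicit Arguments. Unset Strict Implicit. Unset Printing Implicit Defensive.
Import Order.TTheory GRing.Theory Num.Theory.
Local Open Scope ring_scope.

Definition bkernel (R : realType) (p : nat -> R) (x y : nat) : R :=
  if x == 0%N then (y == 1%N)%:R
  else if y == x.+1 then p x
  else if y == x.-1 then 1 - p x
  else 0.

(* f_m = P_0(tau_0 = m), tau_0 = min{n >= 1 : X_n = 0}, computed as the sum over
   all paths (w_0,...,w_m) with w_0 = 0, w_m = 0, w_i <> 0 for 0 < i < m, of the
   product of one-step transition probabilities.  Paths of m steps from 0 stay
   in {0,...,m}, so positions are taken in 'I_m.+1.  f_0 = 0 since tau_0 >= 1. *)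
Definition first_return (R : realType) (p : nat -> R) (m : nat) : R :=
  if m is 0%N then 0 else
  \sum_(w : {ffun 'I_m.+1 -> 'I_m.+1} |
          [&& w ord0 == ord0, w ord_max == ord0 &
              [forall i : 'I_m.+1, ((0 < i)%N && (i < m)%N) ==> (w i != ord0)]])
    \prod_(i < m) bkernel p (w (inord i)) (w (inord i.+1)).

Definition Aavg (R : realType) (f : nat -> R) (m n : nat) : R :=
  2 / ((n - m)%:R + 2) * \sum_(m <= j < n.+1) f j.

From HB Require Import structures.
From mathcomp Require Import all_boot all_order all_algebra.
From mathcomp Require Import all_classical all_reals all_analysis.
From mathcomp Require Import zify ring lra.
Import Order.TTheory GRing.Theory Num.Theory.
Set Implicit Arguments. Unset Strict Implicit. Unset Printing Implicit Defensive.
Local Open Scope ring_scope.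

(* Cutting off the forced steps 0 -> 1 and 1 -> 0, f_(t+2) = (1 - p 1) K^t(1,1) where K is
   the walk killed on hitting 0, restricted to a box too large for t steps from 1 to notice.
   K is reversible for weights pi, so K^(s+t)(1,1) = pi(1) sum_x K^s(1,x) K^t(1,x) / pi(x) is
   an inner product, and sum_x (K^s(1,x) - K^t(1,x))^2 / pi(x) >= 0 yields
   2 f_(s+t+2) <= f_(2s+2) + f_(2t+2), the first inequality.  Summing it over the half-widths
   0, ..., k/2 and using that f vanishes at odd times gives (k+1) f_m <= sum_(m-k..m+k) f, the
   second. *)

Section PathSum.
Variables (R : pzSemiRingType) (S : finType).

Definition ffun_rcons t (u : {ffun 'I_t.+1 -> S}) (x : S) : {ffun 'I_t.+2 -> S} :=
  [ffun i : 'I_t.+2 => if (i < t.+1)%N then u (inord i) else x].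

Lemma ffun_rcons_lt t (u : {ffun 'I_t.+1 -> S}) x j :
  (j < t.+1)%N -> ffun_rcons u x (inord j) = u (inord j).
Proof.
move=> ltjt; rewrite ffunE inordK ?ltjt; last exact: ltnW.
by congr (u _); apply/val_inj; rewrite /= !inordK // ltnW.
Qed.

Lemma ffun_rcons0 t (u : {ffun 'I_t.+1 -> S}) x : ffun_rcons u x ord0 = u ord0.
Proof. by rewrite ffunE /=; congr (u _); apply/val_inj; rewrite /= inordK. Qed.

Lemma ffun_rcons_max t (u : {ffun 'I_t.+1 -> S}) x : ffun_rcons u x ord_max = x.
Proof. by rewrite ffunE /= ltnn. Qed.

Lemma prod_ffun_rcons (F : nat -> S -> S -> R) t (u : {ffun 'I_t.+1 -> S}) x :
  \prod_(i < t.+1) F i (ffun_rcons u x (inord i)) (ffun_rcons u x (inord i.+1)) =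
  \prod_(i < t) F i (u (inord i)) (u (inord i.+1)) * F t (u ord_max) x.
Proof.
rewrite big_ord_recr /=; congr (_ * _).
  by apply: eq_bigr => i _; rewrite !ffun_rcons_lt //; have := ltn_ord i; lia.
rewrite ffun_rcons_lt // ffunE inordK // ltnn.
by congr (F t (u _) x); apply/val_inj; rewrite /= inordK.
Qed.

Lemma sum_ffun1 (G : {ffun 'I_1 -> S} -> R) :
  \sum_(w : {ffun 'I_1 -> S}) G w = \sum_(x : S) G [ffun => x].
Proof.
rewrite (reindex (fun x : S => [ffun => x])) //.
exists (fun w : {ffun 'I_1 -> S} => w ord0) => [x _|w _]; first by rewrite ffunE.
by apply/ffunP => i; rewrite ffunE (ord1 i).
Qed.

Lemma sum_ffunS t (G : {ffun 'I_t.+2 -> S} -> R) :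
  \sum_(w : {ffun 'I_t.+2 -> S}) G w =
  \sum_(u : {ffun 'I_t.+1 -> S}) \sum_(x : S) G (ffun_rcons u x).
Proof.
rewrite pair_big /= (reindex (fun ux => ffun_rcons ux.1 ux.2)) //.
exists (fun w : {ffun 'I_t.+2 -> S} =>
   ([ffun i : 'I_t.+1 => w (inord i)], w ord_max)) => [[u x] _|w _] /=.
  congr pair; last by rewrite ffunE /= ltnn.
  apply/ffunP => i; rewrite ffunE (ffun_rcons_lt _ _ (ltn_ord i)).
  by congr (u _); apply/val_inj; rewrite /= inordK.
apply/ffunP => i; rewrite !ffunE.
case: ifP => lt_it; first by congr (w _); apply/val_inj; rewrite /= !inordK // ltnW.
by congr (w _); apply/val_inj => /=; have := ltn_ord i; lia.
Qed.

End PathSum.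

Lemma path_sum_prodmx (R : pzSemiRingType) n (F : nat -> 'M[R]_n) t a b :
  \sum_(w : {ffun 'I_t.+1 -> 'I_n} | (w ord0 == a) && (w ord_max == b))
     \prod_(i < t) F i (w (inord i)) (w (inord i.+1)) = (\prod_(i < t) F i) a b.
Proof.
elim: t b => [|t IH] b.
  rewrite big_ord0 mxE big_mkcond sum_ffun1 /=.
  under eq_bigr => x _ do rewrite !ffunE big_ord0.
  rewrite -big_mkcond; case: eqVneq => [<-|neq_ab].
    by rewrite (eq_bigl (pred1 a)) ?big_pred1_eq // => x; rewrite andbb.
  by rewrite big1 // => x /andP [/eqP -> /eqP eq_ab]; rewrite eq_ab eqxx in neq_ab.
rewrite big_ord_recr /= -mulmxE mxE big_mkcond sum_ffunS /=.
transitivity (\sum_(u : {ffun 'I_t.+1 -> 'I_n} | u ord0 == a)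
    \prod_(i < t) F i (u (inord i)) (u (inord i.+1)) * F t (u ord_max) b).
  rewrite [RHS]big_mkcond; apply: eq_bigr => u _.
  rewrite (bigD1 b) //= [X in _ + X]big1 => [|x neq_xb]; last first.
    by rewrite ffun_rcons_max (negbTE neq_xb) andbF.
  by rewrite addr0 ffun_rcons0 ffun_rcons_max eqxx andbT (prod_ffun_rcons (fun i => F i)).
rewrite (partition_big (fun u : {ffun 'I_t.+1 -> 'I_n} => u ord_max) xpredT) //=.
apply: eq_bigr => x _; rewrite -IH big_distrl /=.
by apply: eq_bigr => u /andP [_ /eqP ->].
Qed.

Section Reversible.
Variables (R : realFieldType) (n : nat) (A : 'M[R]_n) (pi : 'I_n -> R).
Hypothesis pi_gt0 : forall i, 0 < pi i.
Hypothesis detailed_balance : forall i j, pi i * A i j = pi j * A j i.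

Lemma balance_expr t i j : pi i * (A ^+ t) i j = pi j * (A ^+ t) j i.
Proof.
elim: t i j => [|t IH] i j.
  by rewrite !expr0 !mxE eq_sym; case: eqVneq => [->|]; rewrite ?mulr0.
rewrite [in LHS]exprS [in RHS]exprSr -!mulmxE !mxE !mulr_sumr; apply: eq_bigr => k _.
by rewrite mulrA detailed_balance mulrAC IH -mulrA.
Qed.

Lemma exprD_diag s t a :
  (A ^+ (s + t)) a a = pi a * \sum_x (A ^+ s) a x * (A ^+ t) a x / pi x.
Proof.
rewrite exprD -mulmxE mxE mulr_sumr; apply: eq_bigr => x _.
have pix_neq0 : pi x != 0 by rewrite gt_eqF.
by apply: (mulfI pix_neq0); rewrite mulrCA balance_expr; field.
Qed.

Lemma expr_diag_midpoint s t a :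
  2 * (A ^+ (s + t)) a a <= (A ^+ (s + s)) a a + (A ^+ (t + t)) a a.
Proof.
rewrite !exprD_diag mulrCA -mulrDr -subr_ge0 -mulrBr.
apply: mulr_ge0; first exact: ltW.
rewrite mulr_sumr -big_split -sumrB /=; apply: sumr_ge0 => x _.
have pix_gt0 := pi_gt0 x.
have -> : (A ^+ s) a x * (A ^+ s) a x / pi x + (A ^+ t) a x * (A ^+ t) a x / pi x
    - 2 * ((A ^+ s) a x * (A ^+ t) a x / pi x)
    = ((A ^+ s) a x - (A ^+ t) a x) ^+ 2 / pi x by field; rewrite gt_eqF.
by rewrite divr_ge0 ?sqr_ge0 ?ltW.
Qed.

End Reversible.

Section NatKernel.
Variables (R : pzSemiRingType) (k : nat -> nat -> R).

Definition nat_mx L : 'M[R]_L := \matrix_(i, j) k i j.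

Lemma nat_mx_expr_parity (k_bipartite : forall x y, ~~ odd (x + y) -> k x y = 0)
    L t (i j : 'I_L) :
  odd t != odd (i + j) -> (nat_mx L ^+ t) i j = 0.
Proof.
elim: t j => [|t IH] j odd_tij.
  rewrite expr0 mxE; case: (eqVneq i j) => [eq_ij|//].
  by rewrite eq_ij addnn odd_double in odd_tij.
rewrite exprSr -mulmxE mxE big1 // => x _; rewrite mxE.
have [eq_odd|neq_odd] := eqVneq (odd t) (odd (i + x)).
  rewrite k_bipartite ?mulr0 //; move: odd_tij eq_odd; rewrite /= !oddD.
  by case: (odd t) (odd i) (odd j) (odd x) => [] [] [] [].
by rewrite IH ?mul0r.
Qed.

Section Band.
Hypothesis k_band : forall x y, (x.+1 < y)%N -> k x y = 0.

Lemma nat_mx_expr_band L t (i j : 'I_L) : (i + t < j)%N -> (nat_mx L ^+ t) i j = 0.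
Proof.
elim: t j => [|t IH] j lt_itj.
  by rewrite expr0 mxE (_ : i == j = false) //; apply: contraTF lt_itj => /eqP ->; lia.
rewrite exprSr -mulmxE mxE big1 // => x _; rewrite mxE.
have [lt_itx|le_xit] := ltnP (i + t) x; first by rewrite IH ?mul0r.
by rewrite k_band ?mulr0 //; lia.
Qed.

Lemma nat_mx_exprSr L t i j : (i + t <= L)%N -> (j <= L)%N ->
  (nat_mx L.+1 ^+ t.+1) (inord i) (inord j) =
  \sum_(x < (i + t).+1) (nat_mx L.+1 ^+ t) (inord i) (inord x) * k x j.
Proof.
move=> le_itL le_jL; rewrite exprSr -mulmxE mxE.
rewrite [RHS](big_ord_widen L.+1 (fun x => (nat_mx L.+1 ^+ t) (inord i) (inord x) * k x j)) //.
rewrite [RHS]big_mkcond /=; apply: eq_bigr => x _.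
rewrite mxE inord_val inordK //; case: ltnP => // le_itx.
by rewrite nat_mx_expr_band ?mul0r // inordK //; lia.
Qed.

(* Started at [i], t steps of a band kernel never see the truncation at [L >= i + t]. *)
Lemma nat_mx_expr_trunc L L' t i j :
    (i + t <= L)%N -> (i + t <= L')%N -> (j <= L)%N -> (j <= L')%N ->
  (nat_mx L.+1 ^+ t) (inord i) (inord j) = (nat_mx L'.+1 ^+ t) (inord i) (inord j).
Proof.
elim: t j => [|t IH] j leL leL' lejL lejL'.
  by rewrite !expr0 !mxE -!val_eqE /= !inordK //; lia.
rewrite !nat_mx_exprSr; try lia.
by apply: eq_bigr => x _; rewrite IH //; have := ltn_ord x; lia.
Qed.

End Band.
End NatKernel.

Lemma sum_nat_center_ge (R : realFieldType) (g : nat -> R) n J : (J <= n)%N ->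
    (forall j, (j <= J)%N -> 2 * g n <= g (n + j)%N + g (n - j)%N) ->
  (J.*2.+1)%:R * g n <= \sum_((n - J)%N <= i < (n + J).+1) g i.
Proof.
elim: J => [|J IH] le_Jn convex_g; first by rewrite addn0 subn0 big_nat1 mul1r.
rewrite big_ltn; last by lia.
rewrite (_ : (n - J.+1).+1 = n - J)%N; last by lia.
rewrite addnS big_nat_recr /=; last by lia.
have := IH (ltnW le_Jn) (fun j le_jJ => convex_g j (leqW le_jJ)).
have := convex_g J.+1 (leqnn _).
rewrite (_ : (J.+1).*2.+1 = J.*2.+1 + 2)%N ?natrD ?mulrDl -?addnS; last by lia.
lra.
Qed.

Lemma sum_nat_double (R : nmodType) (g : nat -> R) a b : (a <= b)%N ->
    (forall i, odd i -> (a.*2 < i < b.*2)%N -> g i = 0) ->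
  \sum_(a.*2 <= i < b.*2.+1) g i = \sum_(a <= i < b.+1) g i.*2.
Proof.
elim: b => [|b IH]; first by rewrite leqn0 => /eqP -> _; rewrite !big_nat1.
rewrite leq_eqVlt => /orP [/eqP -> _|lt_ab g_odd]; first by rewrite !big_nat1.
rewrite doubleS [LHS]big_nat_recr ?[X in X + _ = _]big_nat_recr ?[RHS]big_nat_recr /=;
  try lia.
rewrite IH ?(g_odd b.*2.+1) ?addr0 /= ?odd_double //.
  by apply/andP; split; lia.
by move=> i odd_i /andP [lt_ai lt_ib]; apply: g_odd => //; apply/andP; split; lia.
Qed.

Section FirstReturn.
Variables (R : realType) (p : nat -> R).

Lemma bkernel_far x y : y != x.+1 -> x != y.+1 -> bkernel p x y = 0.
Proof.
move=> /negbTE y_neq xS_neq; rewrite /bkernel y_neq.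
case: x y_neq xS_neq => [/= -> //|x _ xS_neq] /=.
by rewrite ifF //; apply: contraNF xS_neq => /eqP ->.
Qed.

Definition killed_kernel x y : R := bkernel p x y * (x != 0)%:R * (y != 0)%:R.

Lemma killed_kernel_far x y : y != x.+1 -> x != y.+1 -> killed_kernel x y = 0.
Proof. by move=> *; rewrite /killed_kernel bkernel_far ?mul0r. Qed.

Lemma killed_kernel_band x y : (x.+1 < y)%N -> killed_kernel x y = 0.
Proof. by move=> lt_xy; rewrite killed_kernel_far //; apply/eqP; lia. Qed.

Lemma killed_kernel_bipartite x y : ~~ odd (x + y) -> killed_kernel x y = 0.
Proof.
move=> even_xy; rewrite killed_kernel_far //; apply: contraNneq even_xy => ->.
  by rewrite addnS /= addnn odd_double.
by rewrite addSn /= addnn odd_double.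
Qed.

Local Notation killed_mx := (nat_mx killed_kernel).

(* Solves detailed balance pi(x+1) (1 - p(x+1)) = pi(x) p(x) with pi(1) = 1. *)
Definition walk_weight x : R := \prod_(1 <= i < x) (p i / (1 - p i.+1)).

Hypothesis p_gt0 : forall x, (0 < x)%N -> 0 < p x.
Hypothesis p_lt1 : forall x, (0 < x)%N -> p x < 1.

Lemma walk_weight_gt0 x : 0 < walk_weight x.
Proof.
rewrite /walk_weight big_nat_cond prodr_gt0 // => i /andP [/andP [i_gt0 _] _].
by rewrite divr_gt0 ?p_gt0 ?subr_gt0 ?p_lt1.
Qed.

Lemma walk_weight_balance x y :
  walk_weight x * killed_kernel x y = walk_weight y * killed_kernel y x.
Proof.
have balance_up z :
    walk_weight z * killed_kernel z z.+1 = walk_weight z.+1 * killed_kernel z.+1 z.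
  rewrite /killed_kernel /bkernel; case: z => [|z] /=; first by rewrite !(mulr0, mul0r).
  rewrite !eqxx !mulr1 ifF; last by apply/eqP; lia.
  have q_neq0 : 1 - p z.+2 != 0 by rewrite subr_eq0 eq_sym lt_eqF ?p_lt1.
  by rewrite /walk_weight [in RHS]big_nat_recr //=; field.
have [->|neq_yx1] := eqVneq y x.+1; first exact: balance_up.
have [->|neq_xy1] := eqVneq x y.+1; first by rewrite balance_up.
by rewrite !killed_kernel_far ?mulr0.
Qed.

(* Weight of step [i] of an [m]-step path from 0; positions at times 1, ..., m-1 may not be 0. *)
Definition taboo_mx m i : 'M[R]_m.+1 :=
  \matrix_(x, y) (bkernel p x y * ((0 < i)%N ==> (x != ord0))%:R
                                * ((i.+1 < m)%N ==> (y != ord0))%:R).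

Lemma prod_taboo_indicator m (w : {ffun 'I_m.+1 -> 'I_m.+1}) :
  \prod_(i < m) (((0 < i)%N ==> (w (inord i) != ord0))%:R
                 * ((i.+1 < m)%N ==> (w (inord i.+1) != ord0))%:R)
  = [forall i : 'I_m.+1, ((0 < i) && (i < m))%N ==> (w i != ord0)]%:R :> R.
Proof.
case: (boolP [forall i : 'I_m.+1, _]) => [/forallP interior|/forallPn [i0]].
  have nz j : (0 < j)%N -> (j < m)%N -> w (inord j) != ord0.
    by move=> j_gt0 lt_jm; have := interior (inord j); rewrite inordK ?j_gt0 ?lt_jm //; lia.
  apply: big1 => i _; have lt_im := ltn_ord i.
  have nz_i : (0 < i)%N ==> (w (inord i) != ord0).
    by apply/implyP => i_gt0; exact: nz.
  have nz_iS : (i.+1 < m)%N ==> (w (inord i.+1) != ord0).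
    by apply/implyP; exact: nz.
  by rewrite nz_i nz_iS mulr1.
rewrite negb_imply => /andP [/andP [i0_gt0 lt_i0m] /negPn /eqP w_i0].
by rewrite (bigD1 (Ordinal lt_i0m)) //= i0_gt0 inord_val w_i0 eqxx !mul0r.
Qed.

Lemma first_return_taboo m :
  first_return p m.+1 = (\prod_(i < m.+1) taboo_mx m.+1 i) ord0 ord0.
Proof.
rewrite /first_return -path_sum_prodmx [LHS]big_mkcond [RHS]big_mkcond /=.
apply: eq_bigr => w _; case: (_ == ord0) => //; case: (_ == ord0) => //=.
transitivity (\prod_(i < m.+1) bkernel p (w (inord i)) (w (inord i.+1)) *
    [forall i : 'I_m.+2, ((0 < i) && (i < m.+1))%N ==> (w i != ord0)]%:R).
  by case: [forall _, _]; rewrite ?mulr1 ?mulr0.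
rewrite -prod_taboo_indicator -big_split /=.
by apply: eq_bigr => i _; rewrite mxE mulrA.
Qed.

Lemma taboo_prod t : (\prod_(i < t.+2) taboo_mx t.+2 i) ord0 ord0
  = (1 - p 1) * (killed_mx t.+3 ^+ t) (inord 1) (inord 1).
Proof.
have interior : \prod_(i < t) taboo_mx t.+2 (bump 0 i) = killed_mx t.+3 ^+ t.
  rewrite -[X in _ ^+ X](card_ord t) -prodr_const; apply: eq_bigr => i _.
  apply/matrixP => x y.
  by rewrite !mxE /bump /= add1n !ltnS ltn_ord.
have one_neq0 : (inord 1 : 'I_t.+3) != ord0 by rewrite -val_eqE /= inordK.
have neq1 (x : 'I_t.+3) : x != inord 1 -> nat_of_ord x != 1%N.
  by apply: contraNneq => eq_x1; apply/eqP/val_inj; rewrite /= inordK.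
rewrite big_ord_recl big_ord_recr /= interior mulrA -!mulmxE mxE (bigD1 (inord 1)) //=.
rewrite [X in _ + X]big1 => [|y /neq1 neq_y1]; last first.
  by rewrite !mxE bkernel_far ?mul0r ?mulr0.
rewrite addr0 mxE (bigD1 (inord 1)) //= big1 => [|x /neq1 neq_x1]; last first.
  by rewrite !mxE /bkernel /= (negbTE neq_x1) !mul0r.
rewrite addr0 !mxE /bkernel /= !inordK // one_neq0 /bump add1n ltnn.
by rewrite !(mul1r, mulr1) mulrC.
Qed.

Lemma first_return_killed t L : (t.+1 <= L)%N ->
  first_return p t.+2 = (1 - p 1) * (killed_mx L.+1 ^+ t) (inord 1) (inord 1).
Proof.
move=> le_tL; rewrite first_return_taboo taboo_prod.
by rewrite (nat_mx_expr_trunc killed_kernel_band (L' := L)) //; lia.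
Qed.

Lemma first_return_odd m : odd m -> (1 < m)%N -> first_return p m = 0.
Proof.
case: m => [|[|t]] // odd_t _; rewrite (first_return_killed (L := t.+1)) //.
rewrite nat_mx_expr_parity ?mulr0 ?inordK //.
  by move=> x y; apply: killed_kernel_bipartite.
by move: odd_t; rewrite /= negbK => ->.
Qed.

Lemma first_return_midpoint s t :
  2 * first_return p (s + t).+2 <= first_return p (s + s).+2 + first_return p (t + t).+2.
Proof.
set L := (s + s + (t + t)).+1.
rewrite !(first_return_killed (L := L)) ?/L; try lia.
rewrite mulrCA -mulrDr; apply: ler_wpM2l; first by rewrite subr_ge0 ltW ?p_lt1.
apply: (expr_diag_midpoint (pi := fun i : 'I_L.+1 => walk_weight i)) => [i|i j].
  exact: walk_weight_gt0.
by rewrite !mxE walk_weight_balance.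
Qed.

Lemma first_return_midpoint_even n j : (j < n)%N ->
  2 * first_return p n.*2 <= first_return p (n + j).*2 + first_return p (n - j).*2.
Proof.
move=> lt_jn; have := first_return_midpoint (n.-1 + j) (n.-1 - j).
have -> : ((n.-1 + j) + (n.-1 - j)).+2%N = n.*2 by lia.
have -> : ((n.-1 + j) + (n.-1 + j)).+2%N = (n + j).*2 by lia.
by have -> : ((n.-1 - j) + (n.-1 - j)).+2%N = (n - j).*2 by lia.
Qed.

Lemma first_return_window n j : (j < n)%N ->
  (j.*2.+1)%:R * first_return p n.*2
    <= \sum_((n - j).*2 <= i < (n + j).*2.+1) first_return p i.
Proof.
move=> lt_jn; rewrite sum_nat_double; first last.
- by move=> i odd_i /andP [lt_i _]; apply: first_return_odd => //; lia.
- by lia.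
apply: (sum_nat_center_ge (g := fun i => first_return p i.*2)) => [|j' le_j'j].
  exact: ltnW.
by apply: first_return_midpoint_even; apply: leq_ltn_trans lt_jn.
Qed.

End FirstReturn.

Local Open Scope classical_set_scope.

Theorem lemma5p1 (R : realType) (delta eps : R) (p Rx : nat -> R)
  (hdelta : -1 <= delta)
  (hp : forall x : nat, (0 < x)%N ->
          p x = 2^-1 * (1 - delta / (2 * x%:R) + Rx x / 2))
  (hRx : (fun x : nat => (x%:R * Rx x : R)) @ \oo --> 0%R)
  (heps : 0 < eps)
  (hbnd : forall x : nat, (0 < x)%N ->
          eps <= p x <= 1 - eps /\ eps <= 1 - p x <= 1 - eps) :
  forall k m : nat, ~~ odd k -> ~~ odd m -> (0 < k)%N -> (k < m)%N ->
    first_return p m <= (first_return p (m + k) + first_return p (m - k)) / 2 /\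
    first_return p m <= Aavg (first_return p) (m - k) (m + k).
Proof.
have p_gt0 x : (0 < x)%N -> 0 < p x.
  by move=> /hbnd [/andP [le_eps _] _]; exact: lt_le_trans le_eps.
have p_lt1 x : (0 < x)%N -> p x < 1.
  by move=> /hbnd [_ /andP [le_eps _]]; rewrite -subr_gt0; exact: lt_le_trans le_eps.
move=> k m /even_halfK <- /even_halfK <-; move: k./2 m./2 => j n _ lt_jn.
rewrite ltn_double in lt_jn; rewrite -doubleD -doubleB.
split; first by have := first_return_midpoint_even p_gt0 p_lt1 lt_jn; lra.
have := first_return_window p_gt0 p_lt1 lt_jn.
rewrite /Aavg (_ : ((n + j).*2 - (n - j).*2)%N = j.*2.*2); last by lia.
set S := \sum_(_ <= i < _) _; set f := first_return p n.*2 => le_fS.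
have c_gt0 : 0 < (j.*2.+1)%:R :> R by rewrite ltr0n.
have -> : 2 / ((j.*2.*2)%:R + 2) = (j.*2.+1)%:R^-1 :> R.
  rewrite (_ : (j.*2.*2)%:R + 2 = 2 * (j.*2.+1)%:R :> R); last first.
    by rewrite -natrM -natrD; congr (_%:R); lia.
  by field; rewrite gt_eqF.
by rewrite mulrC ler_pdivlMr // mulrC.
Qed.
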